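(* Let $N\ge2$ and $\mathcal M=(M_{ij})_{1\le i<j\le N}$ a family of real symmetric $2\times2$ matrices. If $Y=\Psi(\mathcal M)\in DD_N$, then $-\phi_{DD}(\mathcal M)\ge-\phi_{SDD}(\mathcal M)\ge -h(Y)$. Moreover, if $M_{ij}=\frac{1}{N-1}I_{2}$ for all $i<j$, then $Y=\Psi(\mathcal M)=I$ and $-\phi_{DD}(\mathcal M)=-\phi_{SDD}(\mathcal M)=-h(Y)=N(N-1)\log(N-1)$.
   Context: $\Psi(\mathcal M)=\sum_{i<j}\Psi_{ij}(M_{ij})$, where $\Psi_{ij}(M)$ is the $N\times N$ matrix whose entries $(i,i),(i,j),(j,i),(j,j)$ are $M(1,1),M(1,2),M(2,1),M(2,2)$ and whose other entries are $0$. $\phi_{DD}(\mathcal M)=\frac12\sum_{i<j}\big[\log(M_{ij}(1,1)^2-M_{ij}(1,2)^2)+\log(M_{ij}(2,2)^2-M_{ij}(1,2)^2)\big]$ with domain $\{M_{ij}(1,1)>|M_{ij}(1,2)|,\ M_{ij}(2,2)>|M_{ij}(1,2)|\ \forall i<j\}$; $\phi_{SDD}(\mathcal M)=\sum_{i<j}\log\big(M_{ij}(1,1)M_{ij}(2,2)-M_{ij}(1,2)^2\big)$ with domain $\{M_{ij}\succ0\}$; $h(Y)=(N-1)\log\det Y-N(N-1)\log(N-1)$ for $Y\succ0$; outside their domains these functions equal $-\infty$. $DD_N$: symmetric $X$ with $X(i,i)\ge\sum_{j\ne i}|X(i,j)|$ for all $i$; $SDD_N$: matrices $DYD$, $D$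 positive diagonal, $Y\in DD_N$. *)

From HB Require Import structures.
From mathcomp Require Import all_boot all_order all_algebra.
From mathcomp Require Import all_classical all_reals all_analysis.
Set Implicit Arguments. Unset Strict Implicit. Unset Printing Implicit Defensive.
Import Order.TTheory GRing.Theory Num.Theory.
Local Open Scope ring_scope.

(* A family (M_ij)_{i<j} of 2x2 real matrices: only entries with i < j matter.
   Indices 1..2 of the paper are 0..1 here. *)
Definition pairfam (R : realType) (N : nat) := 'I_N -> 'I_N -> 'M[R]_2.

Definition symmetric_mx (R : realType) (n : nat) (A : 'M[R]_n) : Prop := A^T = A.

Definition posdef (R : realType) (n : nat) (A : 'M[R]_n) : Prop :=
  A^T = A /\ forall v : 'cV[R]_n, v != 0 -> 0 < (v^T *m A *m v) 0 0.

Definition Psi_ij (R : realType) (N : nat) (i j : 'I_N) (A : 'M[R]_2) : 'M[R]_N :=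
  \matrix_(k, l)
    (if k == i then (if l == i then A 0 0 else if l == j then A 0 1 else 0)
     else if k == j then (if l == i then A 1 0 else if l == j then A 1 1 else 0)
     else 0).

Definition Psi (R : realType) (N : nat) (M : pairfam R N) : 'M[R]_N :=
  \sum_(i < N) \sum_(j < N | (i < j)%N) Psi_ij i j (M i j).

Definition DD (R : realType) (N : nat) (X : 'M[R]_N) : Prop :=
  X^T = X /\ forall i : 'I_N, \sum_(j < N | j != i) `|X i j| <= X i i.

Local Open Scope ereal_scope.

(* Each pair term is -oo outside the domain; a sum of reals with some -oo
   is -oo, so this equals the paper's convention. *)
Definition phiDD (R : realType) (N : nat) (M : pairfam R N) : \bar R :=
  \sum_(i < N) \sum_(j < N | (i < j)%N)
    (if ((M i j 0 0 > `|M i j 0 1|) && (M i j 1 1 > `|M i j 0 1|))%R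
     then ((2%:R)^-1 * (ln (M i j 0 0 ^+ 2 - M i j 0 1 ^+ 2)
                        + ln (M i j 1 1 ^+ 2 - M i j 0 1 ^+ 2)))%:E
     else -oo).

Definition phiSDD (R : realType) (N : nat) (M : pairfam R N) : \bar R :=
  \sum_(i < N) \sum_(j < N | (i < j)%N)
    (if `[< posdef (M i j) >]
     then (ln (M i j 0 0 * M i j 1 1 - M i j 0 1 ^+ 2))%:E
     else -oo).

Definition hfun (R : realType) (N : nat) (Y : 'M[R]_N) : \bar R :=
  if `[< posdef Y >]
  then ((N.-1)%:R * ln (\det Y) - (N * N.-1)%:R * ln ((N.-1)%:R))%:E
  else -oo.

(* For positive definite 2x2 blocks M_ij whose embedding Psi(M) is dominated
   by Y in the quadratic-form order,
     sum_(i<j) ln det M_ij + N (N-1) ln (N-1) <= (N-1) ln det Y.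
   This is proved by induction on N through the Schur complement at the first
   pivot: Y_00 >= sum_k (M_0k)_00, and the Schur complement of Y dominates Psi
   of the remaining blocks plus the diagonal det M_0k / (M_0k)_00.  That diagonal
   is shared out evenly among the N-2 blocks containing each index, and the
   weighted AM-GM inequality for ln accounts for both the pivot and the enlarged
   blocks.  The comparison of phi_DD with phi_SDD is termwise, from
   (a^2 - b^2) (c^2 - b^2) <= (a c - b^2)^2. *)

From HB Require Import structures.
From mathcomp Require Import all_boot all_order all_algebra.
From mathcomp Require Import all_classical all_reals all_analysis.
From mathcomp Require Import ring lra.
Set Implicit Arguments. Unset Strict Implicit. Unset Printing Implicit Defensive.
Import Order.TTheory GRing.Theory Num.Theory.
Local Open Scope ring_scope.

Section SumPairs.
Variable V : nmodType.

Lemma sum_pairs_recl n (F : 'I_n.+1 -> 'I_n.+1 -> V) :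
  \sum_(i < n.+1) \sum_(j < n.+1 | (i < j)%N) F i j =
  \sum_(k < n) F 0 (lift 0 k) +
  \sum_(i < n) \sum_(j < n | (i < j)%N) F (lift 0 i) (lift 0 j).
Proof.
rewrite big_ord_recl; congr (_ + _).
  by rewrite big_mkcond big_ord_recl /= add0r.
apply: eq_bigr => i _.
by rewrite big_mkcond big_ord_recl /= add0r [RHS]big_mkcond.
Qed.

Lemma sum_pairs_addE n (g : 'I_n -> V) :
  \sum_(i < n) \sum_(j < n | (i < j)%N) (g i + g j) = (\sum_i g i) *+ n.-1.
Proof.
have swap : \sum_(i < n) \sum_(j < n | (i < j)%N) g j =
            \sum_(i < n) \sum_(j < n | (j < i)%N) g i.
  by rewrite (exchange_big_dep predT).
under eq_bigr do rewrite big_split /=.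
rewrite big_split /= swap -big_split /= -sumrMnl; apply: eq_bigr => i _.
rewrite big_mkcond [X in _ + X]big_mkcond -big_split /=.
rewrite (eq_bigr (fun j => if j != i then g i else 0)); last first.
  by move=> j _; rewrite neq_ltn; case: ltngtP; rewrite ?addr0 ?add0r.
by rewrite -big_mkcond sumr_const cardC1 card_ord.
Qed.

End SumPairs.

Section RealInequalities.
Variable R : realType.

Lemma ln_le_tangent (u m : R) : 0 < u -> 0 < m -> ln u <= ln m + u / m - 1.
Proof.
move=> u0 m0; have um : 0 < u / m by rewrite divr_gt0.
have -> : ln u = ln m + ln (u / m) by rewrite -lnM ?posrE // mulrC divfK ?gt_eqF.
rewrite -addrA lerD2l.
have := @le_ln1Dx _ (u / m - 1); rewrite (addrC 1) subrK; apply.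
by rewrite ltrBrDl subrr.
Qed.

Lemma ln_wmean_ge (I : finType) (w x : I -> R) :
  (forall i, 0 <= w i) -> (forall i, 0 < x i) -> 0 < \sum_i w i ->
  \sum_i w i * ln (x i) <= (\sum_i w i) * ln ((\sum_i w i * x i) / \sum_i w i).
Proof.
move=> w0 x0 W0; set W := \sum_i w i; set m := (\sum_i w i * x i) / W.
have wx0 : 0 < \sum_i w i * x i.
  have [i /andP[_ wi]] : exists i, true && (0 < w i).
    by apply: psumr_neq0P => //; apply/eqP; rewrite gt_eqF.
  rewrite (bigD1 i) //= ltr_pwDl ?mulr_gt0 ?sumr_ge0 // => j _.
  exact: mulr_ge0 (w0 j) (ltW (x0 j)).
have m0 : 0 < m by rewrite divr_gt0.
apply: (le_trans (y := \sum_i w i * (ln m + x i / m - 1))).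
  by apply: ler_sum => i _; rewrite ler_wpM2l ?ln_le_tangent.
have mean : (\sum_i w i * x i) / m = W by rewrite /m invf_div mulrC divfK ?gt_eqF.
rewrite (eq_bigr (fun i => w i * ln m + w i * x i / m - w i)); last by move=> i _; ring.
by rewrite sumrB big_split /= -!mulr_suml mean addrK.
Qed.

Lemma ln_sum_ge n (f : 'I_n -> R) : (0 < n)%N -> (forall i, 0 < f i) ->
  \sum_i ln (f i) + n%:R * ln n%:R <= n%:R * ln (\sum_i f i).
Proof.
move=> n0 f0; have nR : 0 < n%:R :> R by rewrite ltr0n.
have sf0 : 0 < \sum_i f i.
  by rewrite (bigD1 (Ordinal n0)) //= ltr_pwDl // sumr_ge0 // => i _; apply: ltW.
have := @ln_wmean_ge _ (fun _ => 1) f (fun _ => ler01) f0.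
rewrite -!mulr_sumr !mul1r sumr_const card_ord => /(_ nR).
by rewrite ln_div ?posrE //; lra.
Qed.

Lemma ln_wmean2_ge (n p q : R) : 0 < n -> 0 < p -> 0 < q ->
  n * ln p + ln (n * q) + (n + 1) * ln ((n + 1) / n) <= (n + 1) * ln (p + q).
Proof.
move=> n0 p0 q0; have n10 : 0 < n + 1 by lra.
pose w (b : bool) := if b then n else 1.
pose x (b : bool) := if b then p else n * q.
have w0 b : 0 <= w b by case: b; rewrite /w ?ler01 ?ltW.
have x0 b : 0 < x b by case: b; rewrite /x ?mulr_gt0.
have := ln_wmean_ge w0 x0; rewrite !big_bool /w /x /= !mul1r => /(_ n10).
have -> : (n * p + n * q) / (n + 1) = (p + q) / ((n + 1) / n).
  by field; rewrite ?gt_eqF.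
by rewrite lnM ?posrE // !ln_div ?posrE ?divr_gt0 ?addr_gt0 //; lra.
Qed.

Lemma sqrt_det2_add_diag (a b c x y : R) :
  0 < a -> 0 <= a * c - b ^+ 2 -> 0 <= x -> 0 <= y ->
  (Num.sqrt (a * c - b ^+ 2) + Num.sqrt (x * y)) ^+ 2 <= (a + x) * (c + y) - b ^+ 2.
Proof.
move=> a0 D0 x0 y0; set D := a * c - b ^+ 2 in D0 *.
have c0 : 0 <= c by have := sqr_ge0 b; rewrite /D in D0; nra.
set p := Num.sqrt D; set q := Num.sqrt (x * y).
have pp : p ^+ 2 = D by rewrite sqr_sqrtr.
have qq : q ^+ 2 = x * y by rewrite sqr_sqrtr ?mulr_ge0.
have cross : 2 * p * q <= a * y + c * x.
  have pq0 : 0 <= 2 * p * q by rewrite !mulr_ge0 ?sqrtr_ge0.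
  have axcy0 : 0 <= a * y + c * x by rewrite addr_ge0 ?mulr_ge0 // ltW.
  rewrite -ler_sqr ?nnegrE //.
  have := sqr_ge0 (a * y - c * x); have := sqr_ge0 b; have := mulr_ge0 x0 y0.
  rewrite !exprMn pp qq /D; nra.
have -> : (p + q) ^+ 2 = D + 2 * p * q + x * y by rewrite sqrrD pp qq; ring.
by rewrite /D; lra.
Qed.

Lemma ln_det2_add_diag (n a b c x y : R) :
  0 < n -> 0 < a -> 0 < a * c - b ^+ 2 -> 0 < x -> 0 < y ->
  n * ln (a * c - b ^+ 2) + ln x + ln y + 2 * ((n + 1) * ln ((n + 1) / n))
  <= (n + 1) * ln ((a + x / n) * (c + y / n) - b ^+ 2).
Proof.
move=> n0 a0 D0 x0 y0; have n10 : 0 < n + 1 by lra.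
have xn0 : 0 < x / n by rewrite divr_gt0.
have yn0 : 0 < y / n by rewrite divr_gt0.
set p := Num.sqrt (a * c - b ^+ 2); set q := Num.sqrt (x / n * (y / n)).
have p0 : 0 < p by rewrite sqrtr_gt0.
have q0 : 0 < q by rewrite sqrtr_gt0 mulr_gt0.
have lnE : 2 * ln (p + q) <= ln ((a + x / n) * (c + y / n) - b ^+ 2).
  have sq := sqrt_det2_add_diag a0 (ltW D0) (ltW xn0) (ltW yn0).
  have pq0 : 0 < (p + q) ^+ 2 by rewrite exprn_gt0 ?addr_gt0.
  by rewrite mulr_natl -lnXn ?addr_gt0 // ler_ln ?posrE // (lt_le_trans pq0 sq).
have lnD : ln (a * c - b ^+ 2) = 2 * ln p by rewrite mulr_natl -lnXn // sqr_sqrtr // ltW.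
have nq : (n * q) ^+ 2 = x * y.
  rewrite exprMn sqr_sqrtr; last exact/ltW/mulr_gt0.
  by field; rewrite gt_eqF.
have lnxy : ln x + ln y = 2 * ln (n * q).
  by rewrite -lnM ?posrE // -nq mulr_natl lnXn ?mulr_gt0.
have := ln_wmean2_ge n0 p0 q0; have := ler_wpM2l (ltW n10) lnE; rewrite lnD; lra.
Qed.

End RealInequalities.

Section TwoByTwo.
Variable R : realFieldType.
Implicit Types (A : 'M[R]_2) (s t x y : R).

Definition qf2 A s t := A 0 0 * s ^+ 2 + (A 0 1 + A 1 0) * s * t + A 1 1 * t ^+ 2.
Definition det2 A := A 0 0 * A 1 1 - A 0 1 ^+ 2.
Definition schur2 A := det2 A / A 0 0.
Definition posdef2 A : Prop := A 1 0 = A 0 1 /\ 0 < A 0 0 /\ 0 < det2 A.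
Definition diag2 x y : 'M[R]_2 := diag_mx (\row_i (if i == 0 then x else y)).

Lemma schur2_gt0 A : posdef2 A -> 0 < schur2 A.
Proof. by case=> _ [a0 D0]; rewrite divr_gt0. Qed.

Lemma qf2_ge_schur2 A s t : posdef2 A -> schur2 A * t ^+ 2 <= qf2 A s t.
Proof.
case=> sym [a0 _]; rewrite -subr_ge0.
have -> : qf2 A s t - schur2 A * t ^+ 2 = (A 0 0 * s + A 0 1 * t) ^+ 2 / A 0 0.
  by rewrite /qf2 /schur2 /det2 sym; field; rewrite gt_eqF.
by rewrite divr_ge0 ?sqr_ge0 ?ltW.
Qed.

Lemma qf2_ge0 A s t : posdef2 A -> 0 <= qf2 A s t.
Proof.
move=> A_pd; apply: le_trans (qf2_ge_schur2 s t A_pd).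
by rewrite mulr_ge0 ?sqr_ge0 ?ltW ?schur2_gt0.
Qed.

Lemma qf2_gt0 A s t : posdef2 A -> (s != 0) || (t != 0) -> 0 < qf2 A s t.
Proof.
move=> A_pd st; have [t0 | t0] := eqVneq t 0; last first.
  apply: lt_le_trans (qf2_ge_schur2 s t A_pd).
  by rewrite mulr_gt0 ?schur2_gt0 ?exprn_even_gt0.
rewrite t0 eqxx orbF in st; case: A_pd => _ [a0 _].
by rewrite /qf2 t0 !mulr0 expr0n /= mulr0 !addr0 mulr_gt0 // exprn_even_gt0.
Qed.

Lemma qf2_add_diag A x y s t : qf2 (A + diag2 x y) s t = qf2 A s t + x * s ^+ 2 + y * t ^+ 2.
Proof. by rewrite /qf2 !mxE /=; ring. Qed.

Lemma det2_add_diag A x y :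
  det2 (A + diag2 x y) = (A 0 0 + x) * (A 1 1 + y) - A 0 1 ^+ 2.
Proof. by rewrite /det2 !mxE /= !mulr1n mulr0n addr0. Qed.

Lemma posdef2_add_diag A x y : posdef2 A -> 0 <= x -> 0 <= y -> posdef2 (A + diag2 x y).
Proof.
case=> sym [a0 D0] x0 y0; rewrite /posdef2 det2_add_diag !mxE /= sym.
split=> //; split; first by rewrite mulr1n ltr_wpDr.
have c0 : 0 < A 1 1 by have := sqr_ge0 (A 0 1); rewrite /det2 in D0; nra.
rewrite /det2 in D0; nra.
Qed.

End TwoByTwo.

Section Schur.
Variable R : fieldType.

Definition qform n (Y : 'M[R]_n) (x : 'I_n -> R) : R :=
  \sum_i \sum_j x i * Y i j * x j.

Definition vcons n (t : R) (v : 'I_n -> R) : 'I_n.+1 -> R :=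
  fun i => if unlift 0 i is Some j then v j else t.

Definition schur n (Y : 'M[R]_n.+1) : 'M[R]_n :=
  \matrix_(j, k) (Y (lift 0 j) (lift 0 k) - Y (lift 0 j) 0 * Y 0 (lift 0 k) / Y 0 0).

Lemma vcons0 n t (v : 'I_n -> R) : vcons t v 0 = t.
Proof. by rewrite /vcons unlift_none. Qed.

Lemma vconsS n t (v : 'I_n -> R) j : vcons t v (lift 0 j) = v j.
Proof. by rewrite /vcons liftK. Qed.

Lemma qform_mxE n (Y : 'M[R]_n) (v : 'cV[R]_n) :
  (v^T *m Y *m v) 0 0 = qform Y (fun i => v i 0).
Proof.
rewrite mxE /qform exchange_big; apply: eq_bigr => j _.
by rewrite mxE mulr_suml; apply: eq_bigr => i _; rewrite !mxE.
Qed.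

Lemma qform_sum n I (r : seq I) (P : pred I) (F : I -> 'M[R]_n) x :
  qform (\sum_(i <- r | P i) F i) x = \sum_(i <- r | P i) qform (F i) x.
Proof.
have qformD A B : qform (A + B) x = qform A x + qform B x.
  rewrite /qform -big_split; apply: eq_bigr => i _.
  by rewrite -big_split; apply: eq_bigr => j _; rewrite mxE mulrDr mulrDl.
have qform0 : qform 0 x = 0.
  by rewrite /qform big1 // => i _; rewrite big1 // => j _; rewrite mxE mulr0 mul0r.
exact: (big_morph (fun A : 'M[R]_n => qform A x) qformD qform0).
Qed.

Lemma qform_vcons n (Y : 'M[R]_n.+1) t v :
  qform Y (vcons t v) = t * Y 0 0 * t + \sum_k t * Y 0 (lift 0 k) * v k
    + \sum_j v j * Y (lift 0 j) 0 * t
    + \sum_j \sum_k v j * Y (lift 0 j) (lift 0 k) * v k.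
Proof.
rewrite /qform !big_ord_recl -!addrA !vcons0; congr (_ + (_ + _)).
  by apply: eq_bigr => k _; rewrite vconsS.
under eq_bigr do rewrite big_ord_recl.
rewrite big_split; congr (_ + _); apply: eq_bigr => j _; first by rewrite vconsS vcons0.
by apply: eq_bigr => k _; rewrite !vconsS.
Qed.

Lemma schur_sym n (Y : 'M[R]_n.+1) : Y^T = Y -> (schur Y)^T = schur Y.
Proof.
move=> Ys; have Y_sym i j : Y j i = Y i j by rewrite -{1}Ys mxE.
by apply/matrixP => j k; rewrite !mxE !(Y_sym _ 0) Y_sym (mulrC (Y _ 0)).
Qed.

(* The first coordinate is chosen to minimise the form. *)
Lemma qform_schur n (Y : 'M[R]_n.+1) (v : 'I_n -> R) : Y^T = Y -> Y 0 0 != 0 ->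
  qform Y (vcons (- (\sum_k Y 0 (lift 0 k) * v k) / Y 0 0) v) = qform (schur Y) v.
Proof.
move=> Ys Y0; have Y_sym i j : Y j i = Y i j by rewrite -{1}Ys mxE.
set s := \sum_k _; set t := - s / Y 0 0; rewrite qform_vcons.
have row : \sum_k t * Y 0 (lift 0 k) * v k = t * s.
  by rewrite /s mulr_sumr; apply: eq_bigr => k _; rewrite mulrA.
have col : \sum_j v j * Y (lift 0 j) 0 * t = t * s.
  by rewrite /s mulr_sumr; apply: eq_bigr => k _; rewrite Y_sym; ring.
have rest : \sum_j \sum_k v j * Y (lift 0 j) (lift 0 k) * v k
    = qform (schur Y) v + s * s / Y 0 0.
  rewrite /qform -mulrA {2}/s mulr_suml -big_split; apply: eq_bigr => j _ /=.
  rewrite /s mulr_suml mulr_sumr -big_split; apply: eq_bigr => k _ /=.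
  by rewrite mxE (Y_sym 0); field.
by rewrite row col rest /t; field.
Qed.

Lemma det_schur n (Y : 'M[R]_n.+1) : Y 0 0 != 0 -> \det Y = Y 0 0 * \det (schur Y).
Proof.
move=> Y0.
pose E : 'M[R]_n.+1 :=
  \matrix_(i, j) (if (j == 0) && (i != 0) then - (Y i 0 / Y 0 0) else 0).
have detL : \det (1%:M + E) = 1.
  rewrite det_trig; last first.
    apply/is_trig_mxP => i j lt_ij; rewrite !mxE.
    have /negbTE-> : i != j by rewrite neq_ltn lt_ij.
    have /negbTE-> : j != 0 by apply: contraTneq lt_ij => ->; rewrite ltn0.
    by rewrite addr0.
  by apply: big1 => i _; rewrite !mxE eqxx andbN addr0.
have EY i k : (E *m Y) i k = (if i != 0 then - (Y i 0 / Y 0 0) * Y 0 k else 0).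
  rewrite mxE big_ord_recl big1 => [|j _]; last by rewrite mxE mul0r.
  by rewrite mxE eqxx addr0; case: (i != 0); rewrite ?mul0r.
pose Z := (1%:M + E) *m Y.
have ZE i k : Z i k = Y i k + (if i != 0 then - (Y i 0 / Y 0 0) * Y 0 k else 0).
  by rewrite /Z mulmxDl mul1mx mxE EY.
have -> : \det Y = \det Z by rewrite det_mulmx detL mul1r.
clearbody Z.
rewrite (expand_det_col _ 0) big_ord_recl big1 => [|i _]; last first.
  by rewrite ZE /= mulNr divfK // subrr mul0r.
rewrite ZE /= !addr0 /cofactor /= expr0 mul1r; congr (_ * \det _).
by apply/matrixP => j k; rewrite !mxE ZE /= mulNr mulrAC.
Qed.

End Schur.

Section PairForms.
Variable R : realFieldType.
Local Notation pairs n := ('I_n -> 'I_n -> 'M[R]_2).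

Definition pairform n (M : pairs n) (x : 'I_n -> R) : R :=
  \sum_(i < n) \sum_(j < n | (i < j)%N) qf2 (M i j) (x i) (x j).

Definition dominates_pairs n (Y : 'M[R]_n) (M : pairs n) : Prop :=
  forall x, pairform M x <= qform Y x.

Definition dominates_diag_pairs n (Y : 'M[R]_n) (d : 'I_n -> R) (M : pairs n) : Prop :=
  forall x, \sum_i d i * x i ^+ 2 + pairform M x <= qform Y x.

Definition pairs_posdef2 n (M : pairs n) : Prop :=
  forall i j : 'I_n, (i < j)%N -> posdef2 (M i j).

Definition head_pairs n (M : pairs n.+1) (k : 'I_n) : 'M[R]_2 := M 0 (lift 0 k).
Definition tail_pairs n (M : pairs n.+1) : pairs n := fun j k => M (lift 0 j) (lift 0 k).

(* Each index lies in [n.-1] pairs, so [d] is shared out evenly among them. *)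
Definition spread_pairs n (d : 'I_n -> R) (M : pairs n) : pairs n :=
  fun j k => M j k + diag2 (d j / n.-1%:R) (d k / n.-1%:R).

Lemma pairform_vcons n (M : pairs n.+1) t v :
  pairform M (vcons t v) =
  \sum_k qf2 (head_pairs M k) t (v k) + pairform (tail_pairs M) v.
Proof.
rewrite /pairform sum_pairs_recl vcons0; congr (_ + _).
  by apply: eq_bigr => k _; rewrite vconsS.
by apply: eq_bigr => i _; apply: eq_bigr => j _; rewrite !vconsS.
Qed.

Lemma tail_pairs_posdef2 n (M : pairs n.+1) :
  pairs_posdef2 M -> pairs_posdef2 (tail_pairs M).
Proof. by move=> M_pd j k jk; apply: M_pd; rewrite !lift0. Qed.

Lemma dominates_pivot n (Y : 'M[R]_n.+1) (M : pairs n.+1) :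
  dominates_pairs Y M -> \sum_k head_pairs M k 0 0 <= Y 0 0.
Proof.
move=> /(_ (vcons 1 (fun _ => 0))); rewrite pairform_vcons qform_vcons.
rewrite (eq_bigr (fun k => head_pairs M k 0 0)) => [|k _]; last first.
  by rewrite /qf2 expr1n expr0n /= !mulr0 mulr1 !addr0.
have -> : pairform (tail_pairs M) (fun _ => 0) = 0.
  rewrite /pairform big1 // => i _; rewrite big1 // => j _.
  by rewrite /qf2 expr0n /= !mulr0 !addr0.
rewrite [\sum_k _ * _ * 0]big1 => [|k _]; last by rewrite mulr0.
rewrite [\sum_j 0 * _ * _]big1 => [|j _]; last by rewrite !mul0r.
rewrite [\sum_j _]big1 => [|j _]; last by rewrite big1 // => k _; rewrite mulr0.
by rewrite !addr0 mulr1 mul1r.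
Qed.

Lemma dominates_schur n (Y : 'M[R]_n.+2) (M : pairs n.+2) :
  Y^T = Y -> pairs_posdef2 M -> dominates_pairs Y M ->
  dominates_diag_pairs (schur Y) (fun k => schur2 (head_pairs M k)) (tail_pairs M).
Proof.
move=> Ys M_pd dom v.
have head_pd k : posdef2 (head_pairs M k) by apply: M_pd; rewrite lift0.
have a0 k : 0 < head_pairs M k 0 0 by case: (head_pd k) => _ [].
have Y00 : 0 < Y 0 0.
  apply: lt_le_trans (dominates_pivot dom).
  by rewrite big_ord_recl ltr_pwDl // sumr_ge0 // => k _; apply: ltW.
rewrite -qform_schur ?gt_eqF //; apply: le_trans (dom _).
by rewrite pairform_vcons lerD2r; apply: ler_sum => k _; apply: qf2_ge_schur2.
Qed.

Lemma pairform_spread n (d : 'I_n.+2 -> R) (M : pairs n.+2) v :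
  pairform (spread_pairs d M) v = pairform M v + \sum_i d i * v i ^+ 2.
Proof.
pose g i := d i / n.+1%:R * v i ^+ 2.
have -> : pairform (spread_pairs d M) v =
    \sum_(i < n.+2) \sum_(j < n.+2 | (i < j)%N) (qf2 (M i j) (v i) (v j) + (g i + g j)).
  by apply: eq_bigr => i _; apply: eq_bigr => j _; rewrite qf2_add_diag -addrA.
under eq_bigr do rewrite big_split /=.
rewrite big_split sum_pairs_addE /= -sumrMnl; congr (_ + _); apply: eq_bigr => i _.
by rewrite /g; field; rewrite addrC natr1 pnatr_eq0.
Qed.

Lemma dominates_spread n (Y : 'M[R]_n.+2) d (M : pairs n.+2) :
  dominates_diag_pairs Y d M -> dominates_pairs Y (spread_pairs d M).
Proof. by move=> dom x; rewrite pairform_spread addrC. Qed.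

Lemma spread_pairs_posdef2 n (d : 'I_n -> R) (M : pairs n) :
  (forall k, 0 <= d k) -> pairs_posdef2 M -> pairs_posdef2 (spread_pairs d M).
Proof.
by move=> d0 M_pd i j ij; apply: posdef2_add_diag; rewrite ?divr_ge0 //; apply: M_pd.
Qed.

End PairForms.

Section LogDet.
Variable R : realType.
Local Notation pairs n := ('I_n -> 'I_n -> 'M[R]_2).

Definition sum_ln_det2 n (M : pairs n) : R :=
  \sum_(i < n) \sum_(j < n | (i < j)%N) ln (det2 (M i j)).

Lemma sum_ln_det2_spread n (M : pairs n.+2) (d : 'I_n.+2 -> R) :
  pairs_posdef2 M -> (forall k, 0 < d k) ->
  n.+1%:R * (sum_ln_det2 M + \sum_k ln (d k) + (n.+2 ^ 2)%:R * ln n.+2%:R)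
  <= n.+2%:R * (sum_ln_det2 (spread_pairs d M) + (n.+2 * n.+1)%:R * ln n.+1%:R).
Proof.
move=> M_pd d0; set m : R := n.+1%:R; have m0 : 0 < m by rewrite ltr0n.
have m1 : n.+2%:R = m + 1 :> R by rewrite natr1.
pose g i := ln (d i) + (m + 1) * ln ((m + 1) / m).
have pair_le (i j : 'I_n.+2) : (i < j)%N ->
    m * ln (det2 (M i j)) + (g i + g j) <= (m + 1) * ln (det2 (spread_pairs d M i j)).
  move=> ij; have [_ [a0 D0]] := M_pd i j ij.
  have := ln_det2_add_diag m0 a0 D0 (d0 i) (d0 j).
  by rewrite /spread_pairs /= -/m det2_add_diag /g; lra.
have sum_le : m * sum_ln_det2 M + (\sum_i g i) *+ n.+1
    <= (m + 1) * sum_ln_det2 (spread_pairs d M).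
  rewrite -sum_pairs_addE /sum_ln_det2 !mulr_sumr -big_split /=.
  apply: ler_sum => i _; rewrite !mulr_sumr -big_split /=.
  by apply: ler_sum => j; apply: pair_le.
move: sum_le; rewrite /g big_split /= sumr_const card_ord.
rewrite ln_div ?posrE ?addr_gt0 // -m1 -subr_ge0 => sum_le.
rewrite -subr_ge0; apply: le_trans sum_le _.
by rewrite le_eqVlt; apply/orP; left; apply/eqP; rewrite /m; ring.
Qed.

Definition diag_pairs_bound n : Prop :=
  forall (Y : 'M[R]_n.+1) (d : 'I_n.+1 -> R) (M : pairs n.+1),
  Y^T = Y -> (forall k, 0 < d k) -> pairs_posdef2 M -> dominates_diag_pairs Y d M ->
  0 < \det Y /\
  sum_ln_det2 M + \sum_k ln (d k) + (n.+1 ^ 2)%:R * ln n.+1%:R <= n.+1%:R * ln (\det Y).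

Lemma ln_det_pairs_of_diag n : diag_pairs_bound n ->
  forall (Y : 'M[R]_n.+2) (M : pairs n.+2),
  Y^T = Y -> pairs_posdef2 M -> dominates_pairs Y M ->
  0 < \det Y /\
  sum_ln_det2 M + (n.+2 * n.+1)%:R * ln n.+1%:R <= n.+1%:R * ln (\det Y).
Proof.
move=> bound Y M Ys M_pd dom.
pose a k := head_pairs M k 0 0; pose e k := schur2 (head_pairs M k).
have head_pd k : posdef2 (head_pairs M k) by apply: M_pd; rewrite lift0.
have a0 k : 0 < a k by case: (head_pd k) => _ [].
have e0 k : 0 < e k by apply: schur2_gt0.
have sum_a0 : 0 < \sum_k a k.
  by rewrite big_ord_recl ltr_pwDl // sumr_ge0 // => k _; apply: ltW.
have Y00 : 0 < Y 0 0 := lt_le_trans sum_a0 (dominates_pivot dom).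
have [S0 lnS] := bound _ _ _ (schur_sym Ys) e0 (tail_pairs_posdef2 M_pd)
  (dominates_schur Ys M_pd dom).
have amgm := ln_sum_ge (ltn0Sn n) a0.
have ln_pivot : n.+1%:R * ln (\sum_k a k) <= n.+1%:R * ln (Y 0 0).
  by apply: ler_wpM2l => //; rewrite ler_ln ?posrE //; apply: dominates_pivot.
have detY : \det Y = Y 0 0 * \det (schur Y) by apply: det_schur; rewrite gt_eqF.
split; first by rewrite detY mulr_gt0.
have head_split : sum_ln_det2 M
    = \sum_k (ln (a k) + ln (e k)) + sum_ln_det2 (tail_pairs M).
  rewrite /sum_ln_det2 sum_pairs_recl; congr (_ + _); apply: eq_bigr => k _.
  have -> : det2 (M 0 (lift 0 k)) = a k * e k.
    by rewrite /a /e /schur2 mulrC divfK // lt0r_neq0 ?a0.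
  by rewrite lnM ?posrE.
have -> : (n.+2 * n.+1 = n.+1 ^ 2 + n.+1)%N by ring.
by rewrite detY lnM ?posrE // head_split big_split /= natrD; lra.
Qed.

Lemma ln_det_ge_diag_pairs n : diag_pairs_bound n.
Proof.
elim: n => [|n IH] Y d M Ys d0 M_pd dom.
  have no_pairs (F : 'I_1 -> 'I_1 -> R) : \sum_(i < 1) \sum_(j < 1 | (i < j)%N) F i j = 0.
    by rewrite big1 // => i _; rewrite big1 // => j; rewrite (ord1 i) (ord1 j).
  have := dom (fun _ => 1).
  rewrite /pairform /qform no_pairs !big_ord1 expr1n !mulr1 mul1r addr0.
  move=> dY; have Y0 : 0 < Y 0 0 := lt_le_trans (d0 0) dY.
  rewrite det_mx11 /sum_ln_det2 no_pairs ln1 mulr0 add0r addr0 mul1r.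
  by split=> //; rewrite ler_ln ?posrE.
have [Y0 lnY] := ln_det_pairs_of_diag IH Ys
  (spread_pairs_posdef2 (fun k => ltW (d0 k)) M_pd) (dominates_spread dom).
split=> //; rewrite -(ler_pM2l (ltr0Sn _ n)).
apply: le_trans (sum_ln_det2_spread M_pd d0) _.
by rewrite mulrCA ler_wpM2l.
Qed.

Lemma ln_det_ge_pairs n (Y : 'M[R]_n.+2) (M : pairs n.+2) :
  Y^T = Y -> pairs_posdef2 M -> dominates_pairs Y M ->
  0 < \det Y /\
  sum_ln_det2 M + (n.+2 * n.+1)%:R * ln n.+1%:R <= n.+1%:R * ln (\det Y).
Proof. by apply: ln_det_pairs_of_diag; apply: ln_det_ge_diag_pairs. Qed.

End LogDet.

Section PsiPhi.
Variable R : realType.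

Lemma qform2E (A : 'M[R]_2) x : qform A x = qf2 A (x 0) (x 1).
Proof.
have e1 : lift 0 ord0 = 1 :> 'I_2 by apply: val_inj.
by rewrite /qform !big_ord_recl !big_ord0 e1 /qf2; ring.
Qed.

Lemma qform_Psi_ij n (i j : 'I_n) (A : 'M[R]_2) x : i != j ->
  qform (Psi_ij i j A) x = qf2 A (x i) (x j).
Proof.
move=> ij; have ji : j != i by rewrite eq_sym.
have sum_ij (g : 'I_n -> R) : (forall k, k != i -> k != j -> g k = 0) ->
    \sum_k g k = g i + g j.
  move=> g0; rewrite (bigD1 i) // (bigD1 j) //= big1 ?addr0 // => k /andP[ki kj].
  exact: g0.
rewrite /qform sum_ij => [|k ki kj]; last first.
  by apply: big1 => l _; rewrite mxE (negbTE ki) (negbTE kj) mulr0 mul0r.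
rewrite !sum_ij => [|l li lj|l li lj]; last 2 first.
- by rewrite mxE (negbTE ji) eqxx (negbTE li) (negbTE lj) mulr0 mul0r.
- by rewrite mxE eqxx (negbTE li) (negbTE lj) mulr0 mul0r.
by rewrite !mxE !eqxx (negbTE ji) /qf2; ring.
Qed.

Lemma qform_Psi n (M : pairfam R n) x : qform (Psi M) x = pairform M x.
Proof.
rewrite /Psi qform_sum; apply: eq_bigr => i _.
rewrite qform_sum; apply: eq_bigr => j ij.
by rewrite qform_Psi_ij // neq_ltn ij.
Qed.

Lemma posdef2_posdef (A : 'M[R]_2) : A^T = A -> posdef2 A -> posdef A.
Proof.
move=> As A_pd; split=> // v v0; rewrite qform_mxE qform2E; apply: qf2_gt0 => //.
apply: contraNT v0; rewrite negb_or !negbK => /andP[/eqP v0 /eqP v1].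
apply/eqP/matrixP => i k; rewrite ord1 mxE.
by case: i => [[|[|//]] ?]; [rewrite -v0 | rewrite -v1]; congr (v _ 0); apply: val_inj.
Qed.

Lemma posdef_posdef2 (A : 'M[R]_2) : posdef A -> posdef2 A.
Proof.
case=> As A_pd; have A10 : A 1 0 = A 0 1 by rewrite -{1}As mxE.
have qf2_gt0 s t : (s != 0) || (t != 0) -> 0 < qf2 A s t.
  move=> st; pose v : 'cV[R]_2 := \col_i (if i == 0 then s else t).
  have := A_pd v; rewrite qform_mxE qform2E !mxE /=; apply.
  apply: contraTneq st => v0; have := congr1 (fun w : 'cV_2 => (w 0 0, w 1 0)) v0.
  by rewrite !mxE /= => -[-> ->]; rewrite eqxx.
have a0 : 0 < A 0 0.
  have := qf2_gt0 1 0; rewrite oner_neq0 /qf2 !mulr0 expr0n expr1n /= mulr1 mulr0 !addr0.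
  exact.
split=> //; split=> //.
have := qf2_gt0 (- A 0 1) (A 0 0); rewrite (gt_eqF a0) orbT => /(_ isT).
have -> : qf2 A (- A 0 1) (A 0 0) = A 0 0 * det2 A by rewrite /qf2 /det2 A10; ring.
by rewrite pmulr_rgt0.
Qed.

Lemma posdef_Psi N (M : pairfam R N) : (2 <= N)%N -> (Psi M)^T = Psi M ->
  pairs_posdef2 M -> posdef (Psi M).
Proof.
move=> N2 Ys M_pd; split=> // v v0; rewrite qform_mxE qform_Psi.
set x := fun i => v i 0.
have [k xk] : exists k, x k != 0.
  apply/existsP; apply: contraNT v0 => /existsPn x0.
  by apply/eqP/matrixP => i j; rewrite ord1 mxE; apply/eqP/negbNE/x0.
have [i [j [ij xij]]] : exists i j : 'I_N, (i < j)%N /\ (x i != 0) || (x j != 0).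
  case: (posnP k) => [k0 | k_gt0].
    by exists k, (Ordinal N2); rewrite k0 xk.
  by exists (Ordinal (ltnW N2)), k; rewrite xk orbT.
have term_ge0 (l m : 'I_N) : (l < m)%N -> 0 <= qf2 (M l m) (x l) (x m).
  by move=> lm; apply/qf2_ge0/M_pd.
rewrite /pairform (bigD1 i) //= (bigD1 j) //= -addrA ltr_pwDl ?qf2_gt0 //; first exact: M_pd.
rewrite addr_ge0 ?sumr_ge0 // => [l /andP[il _]|l _]; first exact: term_ge0.
by apply: sumr_ge0 => m; apply: term_ge0.
Qed.

Lemma posdef2_of_dd (A : 'M[R]_2) :
  A 1 0 = A 0 1 -> `|A 0 1| < A 0 0 -> `|A 0 1| < A 1 1 -> posdef2 A.
Proof.
move=> A10 ha hc; have b0 := normr_ge0 (A 0 1).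
have bb : A 0 1 ^+ 2 = `|A 0 1| ^+ 2 by rewrite real_normK ?num_real.
by split=> //; split; rewrite /det2 ?bb; nra.
Qed.

Lemma ln_dd_le (a b c : R) : `|b| < a -> `|b| < c ->
  2^-1 * (ln (a ^+ 2 - b ^+ 2) + ln (c ^+ 2 - b ^+ 2)) <= ln (a * c - b ^+ 2).
Proof.
move=> ha hc; have b0 := normr_ge0 b.
have bb : b ^+ 2 = `|b| ^+ 2 by rewrite real_normK ?num_real.
have u0 : 0 < a ^+ 2 - b ^+ 2 by rewrite bb; nra.
have w0 : 0 < c ^+ 2 - b ^+ 2 by rewrite bb; nra.
have D0 : 0 < a * c - b ^+ 2 by rewrite bb; nra.
rewrite -lnM ?posrE // ler_pdivrMl // mulr_natl -lnXn // ler_ln ?posrE ?mulr_gt0 ?exprn_gt0 //.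
rewrite -subr_ge0 (_ : _ - _ = b ^+ 2 * (a - c) ^+ 2); last by ring.
by rewrite mulr_ge0 ?sqr_ge0.
Qed.

Lemma phiDD_le_phiSDD N (M : pairfam R N) :
  (forall i j : 'I_N, (i < j)%N -> (M i j)^T = M i j) -> (phiDD M <= phiSDD M)%E.
Proof.
move=> Msym; apply: lee_sum => i _; apply: lee_sum => j ij.
case: ifP => [/andP[ha hc] | _]; last exact: leNye.
have M10 : M i j 1 0 = M i j 0 1 by rewrite -{1}(Msym i j ij) mxE.
rewrite asboolT ?lee_fin ?ln_dd_le //.
exact: posdef2_posdef (Msym i j ij) (posdef2_of_dd M10 ha hc).
Qed.

Lemma phiSDD_posdef N (M : pairfam R N) :
  (forall i j : 'I_N, (i < j)%N -> posdef (M i j)) -> phiSDD M = (sum_ln_det2 M)%:E.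
Proof.
move=> pd; rewrite /phiSDD /sum_ln_det2 -sumEFin; apply: eq_bigr => i _.
by rewrite -sumEFin; apply: eq_bigr => j ij; rewrite asboolT //; apply: pd.
Qed.

Lemma phiSDD_le_hfun N (M : pairfam R N) : (2 <= N)%N ->
  (Psi M)^T = Psi M -> (phiSDD M <= hfun (Psi M))%E.
Proof.
move=> N2 Ys.
have [pd | npd] := pselect (forall i j : 'I_N, (i < j)%N -> posdef (M i j)); last first.
  have [i /existsNP[j /not_implyP[ij Mij]]] :
      exists i : 'I_N, ~ forall j : 'I_N, (i < j)%N -> posdef (M i j).
    by apply/existsNP => all; apply: npd => i j; apply: all.
  suff -> : phiSDD M = -oo%E by rewrite leNye.
  apply/esum_eqNyP; exists i; split; rewrite ?mem_index_enum //.
  by apply/esum_eqNyP; exists j; split; rewrite ?mem_index_enum ?asboolF.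
have M_pd : pairs_posdef2 M by move=> i j ij; apply/posdef_posdef2/pd.
rewrite /hfun asboolT; last exact: posdef_Psi.
rewrite phiSDD_posdef // lee_fin.
case: N M N2 Ys pd M_pd => [|[|n]] // M _ Ys _ M_pd.
have dom : dominates_pairs (Psi M) M by move=> x; rewrite qform_Psi.
by have [_] := ln_det_ge_pairs Ys M_pd dom; rewrite /=; lra.
Qed.

Lemma Psi_scalar N (M : pairfam R N) (a : R) :
  (forall i j : 'I_N, (i < j)%N -> M i j = a%:M) -> Psi M = (a *+ N.-1)%:M.
Proof.
move=> Ma; apply/matrixP => k l; rewrite /Psi summxE.
pose g t := a *+ ((k == t) && (l == t)).
transitivity (\sum_(i < N) \sum_(j < N | (i < j)%N) (g i + g j)).
  apply: eq_bigr => i _; rewrite summxE; apply: eq_bigr => j ij.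
  have ij' : (i == j) = false by apply/negbTE; rewrite neq_ltn ij.
  rewrite Ma // !mxE /g /= mulr1n mulr0n.
  have [-> | ki] := eqVneq k i; first by rewrite ij' /= addr0; case: (l == i); case: (l == j).
  rewrite /= add0r; case: (k == j) => //=.
  by have [->|] := eqVneq l i; rewrite ?ij' //; case: (l == j).
rewrite sum_pairs_addE (bigD1 k) //= big1 => [|t tk]; last by rewrite /g eq_sym (negbTE tk).
by rewrite /g eqxx addr0 !mxE eq_sym mulrnAC.
Qed.

Lemma posdef2_scalar (a : R) : 0 < a -> posdef2 (a%:M).
Proof. by move=> a0; rewrite /posdef2 /det2 !mxE /= mulr1n expr0n subr0 mulr_gt0. Qed.

Lemma sum_pairs_EFin N (c : R) :
  (\sum_(i < N) \sum_(j < N | (i < j)%N) (c + c)%:E)%E = ((N * N.-1)%:R * c)%:E.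
Proof.
under eq_bigr do rewrite sumEFin.
by rewrite sumEFin sum_pairs_addE sumr_const card_ord -mulrnA mulr_natl.
Qed.

Lemma phiSDD_scalar N (M : pairfam R N) (a : R) : 0 < a ->
  (forall i j : 'I_N, (i < j)%N -> M i j = a%:M) ->
  phiSDD M = ((N * N.-1)%:R * ln a)%:E.
Proof.
move=> a0 Ma; rewrite /phiSDD -sum_pairs_EFin; apply: eq_bigr => i _.
apply: eq_bigr => j ij; rewrite Ma // asboolT.
  by rewrite !mxE /= mulr1n mulr0n expr0n subr0 lnM ?posrE.
by apply: posdef2_posdef; [apply: tr_scalar_mx | apply: posdef2_scalar].
Qed.

Lemma phiDD_scalar N (M : pairfam R N) (a : R) : 0 < a ->
  (forall i j : 'I_N, (i < j)%N -> M i j = a%:M) ->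
  phiDD M = ((N * N.-1)%:R * ln a)%:E.
Proof.
move=> a0 Ma; rewrite /phiDD -sum_pairs_EFin; apply: eq_bigr => i _.
apply: eq_bigr => j ij; rewrite Ma // !mxE /= mulr1n mulr0n normr0 a0 /=.
by rewrite expr0n subr0 lnXn // mulr2n; congr (_%:E); field.
Qed.

End PsiPhi.

Theorem corollary4p5 (R : realType) (N : nat) (M : pairfam R N) :
  (2 <= N)%N ->
  (forall i j : 'I_N, (i < j)%N -> (M i j)^T = M i j) ->
  DD (Psi M) ->
  ((- phiDD M >= - phiSDD M)%E /\ (- phiSDD M >= - hfun (Psi M))%E) /\
  ((forall i j : 'I_N, (i < j)%N -> M i j = ((N.-1)%:R)^-1%:M) ->
     Psi M = 1%:M /\
     (- phiDD M = - phiSDD M)%E /\ (- phiSDD M = - hfun (Psi M))%E /\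
     (- hfun (Psi M) = ((N * N.-1)%:R * ln ((N.-1)%:R))%:E)%E).
Proof.
(* Only the symmetry part of [DD (Psi M)] is needed. *)
move=> N2 Msym [Ys _].
split; first by rewrite !leeN2; split; [apply: phiDD_le_phiSDD | apply: phiSDD_le_hfun].
move=> Mscalar; set a : R := (N.-1)%:R^-1.
have N1 : 0 < (N.-1)%:R :> R by rewrite ltr0n -ltnS prednK // ltnW.
have a0 : 0 < a by rewrite invr_gt0.
have PsiE : Psi M = 1%:M.
  by rewrite (Psi_scalar Mscalar); congr (_%:M); rewrite /a; field; rewrite gt_eqF.
have Ypd : posdef (Psi M).
  by apply: posdef_Psi => // i j ij; rewrite Mscalar //; apply: posdef2_scalar.
have hE : hfun (Psi M) = (- ((N * N.-1)%:R * ln (N.-1)%:R))%:E.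
  by rewrite /hfun asboolT // PsiE det1 ln1 mulr0 sub0r.
have SDDE : phiSDD M = hfun (Psi M).
  by rewrite (phiSDD_scalar a0 Mscalar) hE /a lnV ?posrE // mulrN.
rewrite (phiDD_scalar a0 Mscalar) -(phiSDD_scalar a0 Mscalar) SDDE hE EFinN oppeK.
by do !split.
Qed.
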